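(* Let $p$ be a prime, $q$ a power of $p$, $n\ge1$ odd, $m=\frac{q^n+1}{q+1}$. Let $\Sigma$ be the set of pairs $(H,M)$ such that $H\le A(P_\infty)$ and $M\le\mu$ are subgroups with $M^m:=\{d^m:d\in M\}=\phi(H)$. For a subgroup $G\le B(Q_\infty)$ set $\Xi(G)=(\pi(G),\pi_d(G))$. Then $\Xi$ is a bijection from the set of subgroups of $B(Q_\infty)$ onto $\Sigma$.
   Context: Let $\mathcal C_n=\mathbb{F}_{q^{2n}}(x,y,z)$ be the function field defined by $x^q+x=y^{q+1}$ and $z^m=y^{q^2}-y$. Let $A(P_\infty)$ be the group of symbols $[a,b,c]$ with $a\in\mathbb{F}_{q^2}^*$, $b,c\in\mathbb{F}_{q^2}$, $c^q+c=b^{q+1}$, with group law $[a',b',c']\circ[a,b,c]=[a'a,ab'+b,a^{q+1}c'+ab^qb'+c]$ (the automorphisms $x\mapsto a^{q+1}x+ab^qy+c$, $y\mapsto ay+b$ of the Hermitian function field $\mathbb{F}_{q^2}(x,y)$), and $\phi:A(P_\infty)\to\mathbb{F}_{q^2}^*$, $[a,b,c]\mapsto a$. Let $B(Q_\infty)$ be the group of automorphisms $[a,b,c,d]$ of $\mathcal C_n$ given by $x\mapsto a^{q+1}x+ab^qy+c$, $y\mapsto ay+b$, $z\mapsto dz$, where $a\in\mathbb{F}_{q^2}^*$, $b,c\in\mathbb{F}_{q^2}$, $c^q+c=b^{q+1}$, $d\in\mathbb{F}_{q^{2n}}$, $d^m=a$; its group law is $[a',b',c',d']\circ[a,b,c,d]=[a'a,ab'+b,a^{q+1}c'+ab^qb'+c,d'd]$.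 Let $\mu\le\mathbb{F}_{q^{2n}}^*$ be the group of $(q^n+1)(q-1)$-th roots of unity. Define $\pi:B(Q_\infty)\to A(P_\infty)$, $[a,b,c,d]\mapsto[a,b,c]$, and $\pi_d:B(Q_\infty)\to\mu$, $[a,b,c,d]\mapsto d$. *)

From HB Require Import structures.
From mathcomp Require Import all_boot all_order all_algebra all_field.
Set Implicit Arguments. Unset Strict Implicit. Unset Printing Implicit Defensive.
Import GRing.Theory.
Local Open Scope ring_scope.

(* F plays the role of F_{q^{2n}}; F_{q^2} is its subfield {x | x^(q^2) = x}. *)
Section Defs.
Variables (F : finFieldType) (q n : nat).

Definition inFq2 (x : F) : bool := x ^+ (q ^ 2) == x.

Definition m_of : nat := ((q ^ n + 1) %/ (q + 1))%N.

Definition Acar : {set F * F * F} :=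
  [set t | let: (a, b, c) := t in
     [&& a != 0, inFq2 a, inFq2 b, inFq2 c & c ^+ q + c == b ^+ q.+1]].

Definition Aid : F * F * F := (1, 0, 0).

Definition Amul (t' t : F * F * F) : F * F * F :=
  let: (a', b', c') := t' in let: (a, b, c) := t in
  (a' * a, a * b' + b, a ^+ q.+1 * c' + a * b ^+ q * b' + c).

Definition Bcar : {set F * F * F * F} :=
  [set t | let: (a, b, c, d) := t in
     [&& a != 0, inFq2 a, inFq2 b, inFq2 c, c ^+ q + c == b ^+ q.+1
       & d ^+ m_of == a]].

Definition Bid : F * F * F * F := (1, 0, 0, 1).

Definition Bmul (t' t : F * F * F * F) : F * F * F * F :=
  let: (a', b', c', d') := t' in let: (a, b, c, d) := t in
  (a' * a, a * b' + b, a ^+ q.+1 * c' + a * b ^+ q * b' + c, d' * d).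

Definition mu : {set F} := [set d | d ^+ ((q ^ n + 1) * (q - 1)) == 1].

Definition is_subgroup_A (H : {set F * F * F}) : Prop :=
  [/\ H \subset Acar, Aid \in H,
      {in H &, forall x y, Amul x y \in H}
    & {in H, forall x, exists2 y, y \in H & Amul y x = Aid}].

Definition is_subgroup_B (G : {set F * F * F * F}) : Prop :=
  [/\ G \subset Bcar, Bid \in G,
      {in G &, forall x y, Bmul x y \in G}
    & {in G, forall x, exists2 y, y \in G & Bmul y x = Bid}].

Definition is_subgroup_mu (M : {set F}) : Prop :=
  [/\ M \subset mu, 1 \in M,
      {in M &, forall x y, x * y \in M}
    & {in M, forall x, exists2 y, y \in M & y * x = 1}].

Definition phi (t : F * F * F) : F := t.1.1.
Definition pi (t : F * F * F * F) : F * F * F := t.1.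
Definition pi_d (t : F * F * F * F) : F := t.2.

Definition Sigma (HM : {set F * F * F} * {set F}) : Prop :=
  let: (H, M) := HM in
  [/\ is_subgroup_A H, is_subgroup_mu M
    & [set d ^+ m_of | d in M] = phi @: H].

Definition Xi (G : {set F * F * F * F}) : {set F * F * F} * {set F} :=
  (pi @: G, pi_d @: G).

End Defs.

Arguments is_subgroup_B F q n G : clear implicits.
Arguments is_subgroup_A F q H : clear implicits.
Arguments is_subgroup_mu F q n M : clear implicits.
Arguments Sigma F q n HM : clear implicits.
Arguments Xi F G : clear implicits.

From Pilot Require Import Defs.
From HB Require Import structures.
From mathcomp Require Import all_boot all_order all_algebra all_field.
From mathcomp Require Import ring.
Import GRing.Theory.
Set Implicit Arguments. Unset Strict Implicit. Unset Printing Implicit Defensive.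
Local Open Scope ring_scope.

(* B(Q_oo) is the fibre product of A(P_oo) and mu over phi and d |-> d ^+ m, so
   every subgroup G lies in the fibre product of its two projections.  Equality
   holds because ker phi is a p-group of exponent p^2 while m is prime to p: a
   suitable power of any (h, d) in G with phi h = 1 is (h, 1).  Conversely, the
   fibre product of any (H, M) in Sigma is a subgroup whose projections are H
   and M, since M^m = phi(H). *)

Lemma dvdn_add1_expn_odd (q n : nat) : odd n -> (q + 1 %| q ^ n + 1)%N.
Proof.
move=> n_odd; rewrite -[(_ %| _)%N]/(Posz (q + 1) %| Posz (q ^ n + 1))%Z.
have -> : Posz (q ^ n + 1) = q%:Z ^+ n - (-1) ^+ n.
  by rewrite -signr_odd n_odd expr1 opprK PoszD -natz natrX natz.
by rewrite subrXX opprK PoszD dvdz_mulr.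
Qed.

Lemma m_ofK (q n : nat) : odd n -> (m_of q n * (q + 1) = q ^ n + 1)%N.
Proof. by move=> n_odd; rewrite divnK // dvdn_add1_expn_odd. Qed.

Lemma imset_group_laws (T U : finType) (mulT : T -> T -> T) (mulU : U -> U -> U)
    (eT : T) (eU : U) (f : T -> U) (G : {set T}) :
  {morph f : x y / mulT x y >-> mulU x y} -> f eT = eU ->
  eT \in G -> {in G &, forall x y, mulT x y \in G} ->
  {in G, forall x, exists2 y, y \in G & mulT y x = eT} ->
  [/\ eU \in f @: G, {in f @: G &, forall x y, mulU x y \in f @: G}
    & {in f @: G, forall x, exists2 y, y \in f @: G & mulU y x = eU}].
Proof.
move=> fM fe G1 GM GV; split.
- by rewrite -fe imset_f.
- by move=> _ _ /imsetP[x xG ->] /imsetP[y yG ->]; rewrite -fM imset_f ?GM.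
- move=> _ /imsetP[x xG ->]; have [y yG yx] := GV x xG.
  by exists (f y); rewrite ?imset_f // -fM yx.
Qed.

Lemma phi_Amul (F : finFieldType) (q : nat) (x y : F * F * F) :
  phi (Amul q x y) = phi x * phi y.
Proof. by case: x => [[a b] c]; case: y => [[a' b'] c']. Qed.

Section HermitianGroup.
Variables (F : finFieldType) (p k : nat).
Hypothesis charFp : p \in [pchar F].
Local Notation q := (p ^ k)%N.

Lemma exprD_pchar_pow (x y : F) : (x + y) ^+ q = x ^+ q + y ^+ q.
Proof.
apply: exprDn_pchar; rewrite pnatX (eq_pnat _ (pcharf_eq charFp)).
by rewrite pnat_id ?orbT // (pcharf_prime charFp).
Qed.

Lemma AmulA (x y z : F * F * F) : Amul q x (Amul q y z) = Amul q (Amul q x y) z.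
Proof.
case: x => [[a1 b1] c1]; case: y => [[a2 b2] c2]; case: z => [[a3 b3] c3].
rewrite /Amul; congr (_, _, _); [ring | ring | ].
by rewrite exprD_pchar_pow !exprMn !exprS; ring.
Qed.

Lemma Amul_idl (x : F * F * F) : Amul q (Aid F) x = x.
Proof. by case: x => [[a b] c]; rewrite /Amul /Aid; congr (_, _, _); ring. Qed.

Lemma Amul_idr (x : F * F * F) : Amul q x (Aid F) = x.
Proof.
have q_gt0 : (0 < q)%N by rewrite expn_gt0 prime_gt0 // (pcharf_prime charFp).
case: x => [[a b] c]; rewrite /Amul /Aid expr0n eqn0Ngt q_gt0 expr1n.
by congr (_, _, _); rewrite /= ?mulr0n; ring.
Qed.

Definition Apow (x : F * F * F) (j : nat) : F * F * F := iter j (Amul q x) (Aid F).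

Lemma Apow1 x : Apow x 1 = x.
Proof. exact: Amul_idr. Qed.

Lemma Apow_add x i j : Apow x (i + j) = Amul q (Apow x i) (Apow x j).
Proof.
elim: i => [|i IHi]; first by rewrite Amul_idl.
by rewrite addSn /Apow !iterS -/(Apow x _) IHi AmulA.
Qed.

Lemma Apow_mul x i j : Apow x (i * j) = Apow (Apow x i) j.
Proof. by elim: j => [|j IHj]; rewrite ?muln0 // mulnS Apow_add IHj. Qed.

Lemma Apow_id j : Apow (Aid F) j = Aid F.
Proof. by elim: j => [|j IHj] //; rewrite /Apow iterS -/(Apow _ j) IHj Amul_idl. Qed.

Lemma Apow_unipotent b c j : exists c', Apow (1, b, c) j = (1, j%:R * b, c').
Proof.
elim: j => [|j [c' IHj]]; first by exists 0; rewrite mul0r.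
rewrite /Apow iterS -/(Apow _ j) IHj /Amul; eexists; congr (_, _, _).
  by ring.
by rewrite -natr1; ring.
Qed.

Lemma Apow_center c j : Apow (1, 0, c) j = (1, 0, j%:R * c).
Proof.
elim: j => [|j IHj]; first by rewrite mul0r.
rewrite /Apow iterS -/(Apow _ j) IHj /Amul -natr1 expr1n.
by congr (_, _, _); ring.
Qed.

(* The p-th power of [1, b, c] is central, and central elements have order p. *)
Lemma Apow_ker_phi_sqr u : phi u = 1 -> Apow u (p * p) = Aid F.
Proof.
have p0 : (p%:R : F) = 0 := pcharf0 charFp.
case: u => [[a b] c]; rewrite /phi /= => ->; rewrite Apow_mul.
have [c' ->] := Apow_unipotent b c p.
by rewrite p0 mul0r Apow_center p0 mul0r.
Qed.

Lemma Apow_ker_phi_modn u e : phi u = 1 -> Apow u e = Apow u (e %% (p * p)).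
Proof.
move=> phi_u; rewrite {1}(divn_eq e (p * p)) Apow_add mulnC Apow_mul.
by rewrite Apow_ker_phi_sqr // Apow_id Amul_idl.
Qed.

End HermitianGroup.

Section FibreProduct.
Variables (F : finFieldType) (p k n : nat).
Hypotheses (charFp : p \in [pchar F]) (k_gt0 : (0 < k)%N) (n_odd : odd n).
Local Notation q := (p ^ k)%N.
Local Notation m := (m_of q n).
Local Notation pi := (@Defs.pi F).
Local Notation pi_d := (@Defs.pi_d F).
Local Notation phi := (@Defs.phi F).

Lemma Bmul_pair (t t' : F * F * F * F) :
  Bmul q t t' = (Amul q (pi t) (pi t'), pi_d t * pi_d t').
Proof. by case: t => [[[a b] c] d]; case: t' => [[[a' b'] c'] d']. Qed.

Lemma Bcar_pi_d_expm g : g \in Bcar F q n -> pi_d g ^+ m = phi (pi g).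
Proof.
by case: g => [[[a b] c] d]; rewrite inE => /and5P[_ _ _ _ /andP[_ /eqP]].
Qed.

(* d ^+ ((q ^ n + 1) * (q - 1)) = (d ^+ m) ^+ (q ^ 2 - 1) = a ^+ (q ^ 2 - 1) = 1
   as a is a nonzero element of F_(q^2). *)
Lemma Bcar_pi_d_mu g : g \in Bcar F q n -> pi_d g \in mu F q n.
Proof.
case: g => [[[a b] c] d]; rewrite !inE /= => /and5P[a0 /eqP aq _ _].
move=> /andP[_ /eqP dm]; rewrite -(m_ofK q n_odd) -mulnA exprM dm.
have q_gt0 : (0 < q)%N by rewrite expn_gt0 prime_gt0 // (pcharf_prime charFp).
have sq : (((q + 1) * (q - 1)).+1 = q ^ 2)%N.
  by rewrite mulnC -subn_sqr exp1n subn1 prednK // expn_gt0 q_gt0.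
by apply/eqP/(mulIf a0); rewrite mul1r -exprSr sq aq.
Qed.

Lemma coprime_sqr_char_m : coprime (p * p) m.
Proof.
have p_prime := pcharf_prime charFp.
rewrite coprimeMl andbb prime_coprime //; apply/negP => p_dvd_m.
have : (p %| q ^ n + 1)%N by rewrite -(m_ofK q n_odd) dvdn_mulr.
rewrite dvdn_addr ?dvdn1 ?(gtn_eqF (prime_gt1 p_prime)) //.
by rewrite -expnM dvdn_exp // muln_gt0 k_gt0 odd_gt0.
Qed.

Definition Bpow (w : F * F * F * F) (j : nat) : F * F * F * F :=
  iter j (Bmul q w) (Bid F).

Lemma Bpow_pair w j : Bpow w j = (Apow p k (pi w) j, pi_d w ^+ j).
Proof. by elim: j => [|j IHj] //=; rewrite Bmul_pair IHj exprS. Qed.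

(* Raise w to an exponent that is 1 modulo p^2 and 0 modulo m: the first
   coordinate lies in a group of exponent p^2, the last one in a group of
   exponent m. *)
Lemma ker_phi_mem (G : {set F * F * F * F}) w :
  Bid F \in G -> {in G &, forall x y, Bmul q x y \in G} ->
  w \in Bcar F q n -> w \in G -> phi (pi w) = 1 -> (pi w, 1) \in G.
Proof.
move=> G1 GM wB wG phi_w.
have Bpow_mem j : Bpow w j \in G by elim: j => [|j IHj] //=; apply: GM.
have p_gt1 := prime_gt1 (pcharf_prime charFp).
have pp_gt1 : (1 < p * p)%N by rewrite (leq_trans p_gt1) // leq_pmull // ltnW.
pose e := chinese (p * p) m 1 0.
have e_pp : (e %% (p * p) = 1)%N.
  by rewrite (chinese_modl coprime_sqr_char_m) modn_small.
have e_m : (e %% m = 0)%N by rewrite (chinese_modr coprime_sqr_char_m) mod0n.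
have := Bpow_mem e; rewrite Bpow_pair Apow_ker_phi_modn // e_pp Apow1 //.
by rewrite -(expr_mod _ (_ : pi_d w ^+ m = 1)) ?e_m // Bcar_pi_d_expm.
Qed.

Definition fibre_prod (H : {set F * F * F}) (M : {set F}) : {set F * F * F * F} :=
  [set t | [&& pi t \in H, pi_d t \in M & pi_d t ^+ m == phi (pi t)]].

Lemma Xi_Sigma G : is_subgroup_B F q n G -> Sigma F q n (Xi F G).
Proof.
case=> GB G1 GM GV; have GBcar := subsetP GB.
have pi_morph : {morph pi : x y / Bmul q x y >-> Amul q x y}.
  by move=> x y; rewrite Bmul_pair.
have pi_d_morph : {morph pi_d : x y / Bmul q x y >-> x * y}.
  by move=> x y; rewrite Bmul_pair.
have [H1 HM HV] := imset_group_laws pi_morph (erefl : pi (Bid F) = _) G1 GM GV.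
have [M1 MM MV] := imset_group_laws pi_d_morph (erefl : pi_d (Bid F) = _) G1 GM GV.
split; [split => // | split => // | ].
- apply/subsetP => _ /imsetP[[[[a b] c] d] /GBcar gB ->].
  by move: gB; rewrite !inE /= => /and5P[-> -> -> -> /andP[-> _]].
- by apply/subsetP => _ /imsetP[g /GBcar gB ->]; apply: Bcar_pi_d_mu.
- rewrite -!imset_comp; apply: eq_in_imset => g /GBcar.
  exact: Bcar_pi_d_expm.
Qed.

(* If pi g1 = h and pi_d g2 = d with d ^+ m = phi h, then w := g1 * g2^-1 has
   phi (pi w) = 1, so (pi w, 1) * g2 = (h, d) lies in G. *)
Lemma subgroup_B_fibre_prod G :
  is_subgroup_B F q n G -> G = fibre_prod (pi @: G) (pi_d @: G).
Proof.
case=> GB G1 GM GV; have GBcar := subsetP GB.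
apply/setP => t; rewrite inE; apply/idP/and3P.
  by move=> tG; rewrite !imset_f // Bcar_pi_d_expm ?GBcar.
case=> /imsetP[g1 g1G t1E] /imsetP[g2 g2G t2E] /eqP tmE.
have [y yG yg2] := GV g2 g2G.
have y_g2 : Amul q (pi y) (pi g2) = Aid F.
  by rewrite -[RHS]/(pi (Bid F)) -yg2 Bmul_pair.
pose w := Bmul q g1 y; have wG : w \in G by apply: GM.
have w_ker : phi (pi w) = 1.
  rewrite /w Bmul_pair /= phi_Amul -t1E -tmE t2E Bcar_pi_d_expm ?GBcar //.
  by rewrite mulrC -(phi_Amul q (pi y)) y_g2.
have := GM _ _ (ker_phi_mem G1 GM (GBcar _ wG) wG w_ker) g2G.
rewrite Bmul_pair /w Bmul_pair /= mul1r -AmulA // y_g2 Amul_idr // -t1E -t2E.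
by case: t {t1E t2E tmE}.
Qed.

Lemma fibre_prod_subgroup H M :
  Sigma F q n (H, M) -> is_subgroup_B F q n (fibre_prod H M).
Proof.
case=> [[HA H1 HM HV] [Mmu M1 MM MV] _]; split.
- apply/subsetP => [[[[a b] c] d]]; rewrite !inE /= => /and3P[/(subsetP HA)].
  by rewrite inE => /and5P[-> -> -> -> ->] _ /eqP->; rewrite eqxx.
- by rewrite inE H1 M1 expr1n eqxx.
- move=> x y; rewrite !inE Bmul_pair /=.
  move=> /and3P[xH xM /eqP xm] /and3P[yH yM /eqP ym].
  by rewrite HM ?MM //= exprMn xm ym phi_Amul.
- move=> x; rewrite inE => /and3P[xH xM /eqP xm].
  have [yh yhH yhx] := HV _ xH; have [yd ydM ydx] := MV _ xM.
  exists (yh, yd); last by rewrite Bmul_pair /= yhx ydx.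
  rewrite inE /= yhH ydM; apply/eqP.
  have : phi (pi x) != 0.
    by move: (subsetP HA _ xH); case: (pi x) => [[a b] c]; rewrite inE => /andP[].
  move=> /mulIf; apply.
  by rewrite -[in LHS]xm -exprMn ydx expr1n -(phi_Amul q) yhx.
Qed.

Lemma Xi_fibre_prod H M : Sigma F q n (H, M) -> Xi F (fibre_prod H M) = (H, M).
Proof.
case=> _ _ HM_m; congr (_, _); apply/setP => x; apply/imsetP/idP.
- by case=> t; rewrite inE => /and3P[tH _ _] ->.
- move=> xH; have /imsetP[d dM dx] : phi x \in [set d ^+ m | d in M].
    by rewrite HM_m; apply: imset_f.
  by exists (x, d); rewrite // inE /= xH dM dx eqxx.
- by case=> t; rewrite inE => /and3P[_ tM _] ->.
- move=> xM; have /imsetP[h hH hx] : x ^+ m \in phi @: H.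
    by rewrite -HM_m; apply: imset_f.
  by exists (h, x); rewrite // inE /= hH xM hx eqxx.
Qed.

End FibreProduct.

Theorem theorem3p5 (p k n : nat) (F : finFieldType)
  (hp : prime p) (hk : (0 < k)%N) (hn : odd n)
  (hF : #|F| = ((p ^ k) ^ (2 * n))%N) :
  let q := (p ^ k)%N in
  [/\ (forall G, is_subgroup_B F q n G -> Sigma F q n (Xi F G)),
      (forall G1 G2, is_subgroup_B F q n G1 -> is_subgroup_B F q n G2 ->
         Xi F G1 = Xi F G2 -> G1 = G2)
    & (forall HM, Sigma F q n HM ->
         exists2 G, is_subgroup_B F q n G & Xi F G = HM)].
Proof.
move=> q; have charFp : p \in [pchar F].
  by apply: (card_finPcharP (n := k * (2 * n))); rewrite // expnM.
split.
- exact: Xi_Sigma.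
- move=> G1 G2 G1sub G2sub [pi_eq pi_d_eq].
  rewrite (subgroup_B_fibre_prod charFp hk hn G1sub).
  by rewrite (subgroup_B_fibre_prod charFp hk hn G2sub) pi_eq pi_d_eq.
- move=> [H M] HM_Sigma; exists (fibre_prod p k n H M).
    exact: fibre_prod_subgroup.
  exact: Xi_fibre_prod.
Qed.
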